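(* Let $G$ be a finite abelian group and $S\subset G$ a partial symmetric Sidon set with center $0$. If $T\subset G$ is a subset with $T\cap(-T)=\emptyset$, then $S\cap T$ is a Sidon set.
   Context: A subset $S\subset G$ is a Sidon set if every solution $(\alpha,\beta,\gamma,\delta)\in S^4$ of $\alpha+\beta=\gamma+\delta$ satisfies $\alpha\in\{\gamma,\delta\}$. $S$ is a partial symmetric Sidon set with center $a_0\in S$ if every solution $(\alpha,\beta,\gamma,\delta)\in S^4$ of $\alpha+\beta=\gamma+\delta$ satisfies either $\alpha\in\{\gamma,\delta\}$ or $\alpha+\beta=\gamma+\delta=a_0$. *)

From mathcomp Require Import all_boot all_order all_algebra.
Set Implicit Arguments. Unset Strict Implicit. Unset Printing Implicit Defensive.
Import GRing.Theory.
Local Open Scope ring_scope.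

Definition sidon (G : finZmodType) (S : {set G}) : Prop :=
  forall a b c d : G, a \in S -> b \in S -> c \in S -> d \in S ->
    a + b = c + d -> a = c \/ a = d.

Definition partial_symmetric_sidon (G : finZmodType) (S : {set G}) (a0 : G) : Prop :=
  a0 \in S /\
  forall a b c d : G, a \in S -> b \in S -> c \in S -> d \in S ->
    a + b = c + d -> (a = c \/ a = d) \/ (a + b = a0 /\ c + d = a0).

From mathcomp Require Import all_boot all_order all_algebra.
Import GRing.Theory.
Local Open Scope ring_scope.

(* A partial symmetric Sidon set with center [0] can violate the Sidon
   property only through solutions with [a + b = c + d = 0], and inside a set
   [T] disjoint from [-T] no two elements sum to [0], as that means [b = -a]. *)

Lemma partial_symmetric_sidon_sub {G : finZmodType} (S U : {set G}) (a0 : G) :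
  partial_symmetric_sidon S a0 -> U \subset S ->
  (forall a b, a \in U -> b \in U -> a + b != a0) ->
  sidon U.
Proof.
move=> [_ pssS] /subsetP sUS sum_neq a b c d aU bU cU dU abcd.
have [//|[ab_a0 _]] := pssS a b c d (sUS a aU) (sUS b bU) (sUS c cU) (sUS d dU) abcd.
by have := sum_neq a b aU bU; rewrite ab_a0 eqxx.
Qed.

Lemma addr_neq0_disjoint_opp {G : finZmodType} (T : {set G}) a b :
  T :&: [set - x | x in T] = set0 -> a \in T -> b \in T -> a + b != 0.
Proof.
move=> disjT aT bT; apply/eqP => /addr0_eq opp_a_b.
have : b \in T :&: [set - x | x in T] by rewrite inE bT -opp_a_b imset_f.
by rewrite disjT inE.
Qed.

Theorem lemma5p1 (G : finZmodType) (S T : {set G}) :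
  partial_symmetric_sidon S 0 ->
  T :&: [set - x | x in T] = set0 ->
  sidon (S :&: T).
Proof.
move=> pssS disjT.
have sum_neq0 a b : a \in S :&: T -> b \in S :&: T -> a + b != 0.
  by rewrite !inE => /andP[_ aT] /andP[_ bT]; exact: addr_neq0_disjoint_opp disjT aT bT.
exact: partial_symmetric_sidon_sub pssS (subsetIl S T) sum_neq0.
Qed.
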